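(* Let $a\in[0,1]$ with $a\neq \frac12$, and define $f_a:[0,1]\to[0,1]$ by $$f_a(x)=\begin{cases}(1-2a)x^2+2ax, & x\in[0,\frac13],\\ x, & x\in(\frac13,1].\end{cases}$$ For $x^{(0)}\in[0,1]$ put $x^{(n)}=f_a^n(x^{(0)})$, where $f_a^n$ denotes the $n$-fold composition of $f_a$ with itself. Then: 1. The set of fixed points of $f_a$ is $\{0\}\cup(\frac13,1]$. 2. If $0\le a<\frac12$, then $\lim_{n\to\infty}x^{(n)}=0$ for every $x^{(0)}\in[0,\frac13]$. 3. If $\frac12<a\le 1$, then for every $x^{(0)}\in(0,\frac13]$ there exist $n\in\mathbb N$ and $p\in(\frac13,\frac19(4a+1)]$ such that $f_a^n(x^{(0)})=p$ and $f_a^{n+1}(x^{(0)})=f_a(p)=p$.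
   Context: This map is the reduction to $[0,1]$ (via $y=1-x$) of the quadratic stochastic operator $x'=x^2+2p(x)xy$, $y'=2(1-p(x))xy+y^2$ on the 1-simplex, with $p(x)=a$ for $x\le\frac13$, $p(x)=b$ for $\frac13<x<\frac23$, $p(x)=c$ for $x\ge\frac23$, in the special case $b=c=\frac12$. *)

From Stdlib Require Import Reals Lra.
Open Scope R_scope.

(* f_a on [0,1]: (1-2a)x^2 + 2ax on [0,1/3], identity on (1/3,1].
   Defined on all of R (the values outside [0,1] are never used). *)
Definition fa (a x : R) : R :=
  if Rle_dec x (1/3) then (1 - 2*a) * x^2 + 2*a*x else x.

Fixpoint fiter (a : R) (n : nat) (x : R) : R :=
  match n with
  | O => x
  | S k => fa a (fiter a k x)
  end.

(** On [[0, 1/3]] the map is [x ↦ x ((1 - 2a) x + 2a)], whose ratio [f_a(x)/x]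
    is affine in [x] and runs from [2a] at [0] to [(1 + 4a)/3] at [1/3].  For
    [a < 1/2] the ratio increases, so [f_a(x) <= (1 + 4a)/3 · x] with
    [(1 + 4a)/3 < 1]: the orbit stays in [[0, 1/3]] and decays geometrically.
    For [a > 1/2] it decreases, so [f_a(x) >= (1 + 4a)/3 · x] with
    [(1 + 4a)/3 > 1]: the orbit grows geometrically until it leaves [[0, 1/3]],
    and since [f_a] is increasing there, it lands in [(1/3, f_a(1/3)]], where
    every point is fixed. *)

From Stdlib Require Import Reals Lra Psatz.
From Coquelicot Require Import Coquelicot.
Open Scope R_scope.

Lemma fa_small a x : x <= 1/3 -> fa a x = x * ((1 - 2*a) * x + 2*a).
Proof. intros Hx; unfold fa; destruct (Rle_dec x (1/3)); [ring | lra]. Qed.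

Lemma fa_large a x : 1/3 < x -> fa a x = x.
Proof. intros Hx; unfold fa; destruct (Rle_dec x (1/3)); lra. Qed.

Lemma fa_fixed_iff a x :
  a <> 1/2 -> 0 <= x <= 1 -> fa a x = x <-> x = 0 \/ 1/3 < x <= 1.
Proof.
  intros Ha Hx; split.
  - intros Hfix; destruct (Rle_dec x (1/3)) as [Hsmall | Hlarge]; [left | right; lra].
    rewrite fa_small in Hfix by exact Hsmall.
    assert (Hprod : (1 - 2*a) * (x * (x - 1)) = 0) by lra.
    destruct (Rmult_integral _ _ Hprod) as [H2a | Hx01]; [lra |].
    destruct (Rmult_integral _ _ Hx01); lra.
  - intros [-> | Hlarge].
    + rewrite fa_small by lra; ring.
    + apply fa_large; lra.
Qed.

Lemma fa_small_increasing a x y :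
  0 <= a -> 0 <= x <= y -> y <= 1/3 -> fa a x <= fa a y.
Proof.
  intros Ha Hxy Hy; rewrite !fa_small by lra.
  assert (Hslope : 0 <= (x + y) + 2*a * (1 - (x + y))) by nra.
  nra.
Qed.

Lemma fa_small_le a x : 0 <= a -> 0 <= x <= 1/3 -> fa a x <= (4*a + 1)/9.
Proof.
  intros Ha Hx.
  replace ((4*a + 1)/9) with (fa a (1/3)) by (rewrite fa_small by lra; field).
  apply fa_small_increasing; lra.
Qed.

Lemma fa_small_stable a x :
  0 <= a <= 1/2 -> 0 <= x <= 1/3 -> 0 <= fa a x <= 1/3.
Proof.
  intros Ha Hx; split.
  - replace 0 with (fa a 0) by (rewrite fa_small by lra; ring).
    apply fa_small_increasing; lra.
  - pose proof (fa_small_le a x); lra.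
Qed.

Lemma fa_small_contract a x :
  a < 1/2 -> 0 <= x <= 1/3 -> fa a x <= (1 + 4*a)/3 * x.
Proof.
  intros Ha Hx; rewrite fa_small by lra.
  assert (0 <= (1 - 2*a) * (1/3 - x)) by (apply Rmult_le_pos; lra).
  nra.
Qed.

Lemma fa_small_expand a x :
  1/2 < a -> 0 <= x <= 1/3 -> (1 + 4*a)/3 * x <= fa a x.
Proof.
  intros Ha Hx; rewrite fa_small by lra.
  assert (0 <= (2*a - 1) * (1/3 - x)) by (apply Rmult_le_pos; lra).
  nra.
Qed.

Lemma Un_cv_squeeze_geometric (u : nat -> R) (c q : R) :
  Rabs q < 1 -> (forall n, 0 <= u n <= c * q^n) -> Un_cv u 0.
Proof.
  intros Hq Hu; apply is_lim_seq_Reals.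
  apply is_lim_seq_le_le with (u := fun _ => 0) (w := fun n => c * q^n); [exact Hu | |].
  - apply is_lim_seq_const.
  - replace (Finite 0) with (Rbar_mult c 0) by (simpl; f_equal; ring).
    apply is_lim_seq_scal_l, is_lim_seq_geom, Hq.
Qed.

Lemma pow_mult_unbounded r x M : 1 < r -> 0 < x -> exists N, M < r^N * x.
Proof.
  intros Hr Hx.
  destruct (Pow_x_infinity r ltac:(rewrite Rabs_right; lra) (M/x + 1)) as [N HN].
  exists N; specialize (HN N (Nat.le_refl N)).
  rewrite Rabs_right in HN by (apply Rle_ge, pow_le; lra).
  assert (Hscaled : (M/x + 1) * x <= r^N * x) by (apply Rmult_le_compat_r; lra).
  replace ((M/x + 1) * x) with (M + x) in Hscaled by (field; lra).
  lra.
Qed.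

Section Contracting.

Variables (a x0 : R).
Hypotheses (Ha : 0 <= a < 1/2) (Hx0 : 0 <= x0 <= 1/3).

Lemma fiter_contract_stable n : 0 <= fiter a n x0 <= 1/3.
Proof.
  induction n as [| n IH]; simpl; [lra |].
  apply fa_small_stable; lra.
Qed.

Lemma fiter_contract_le_geometric n : fiter a n x0 <= ((1 + 4*a)/3)^n * x0.
Proof.
  induction n as [| n IH]; simpl; [lra |].
  pose proof (fiter_contract_stable n) as Hstable.
  pose proof (fa_small_contract a (fiter a n x0) ltac:(lra) Hstable).
  assert (0 <= (1 + 4*a)/3) by lra.
  nra.
Qed.

Lemma fiter_contract_cv_0 : Un_cv (fun n => fiter a n x0) 0.
Proof.
  apply Un_cv_squeeze_geometric with (c := x0) (q := (1 + 4*a)/3).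
  - rewrite Rabs_right; lra.
  - intros n; rewrite Rmult_comm.
    pose proof (fiter_contract_stable n); pose proof (fiter_contract_le_geometric n); lra.
Qed.

End Contracting.

Section Expanding.

Variables (a x0 : R).
Hypotheses (Ha : 1/2 < a) (Hx0 : 0 < x0 <= 1/3).

Definition escapes_at m := 0 <= fiter a m x0 <= 1/3 /\ 1/3 < fiter a (S m) x0.

Lemma fiter_escapes_or_grows n :
  (exists m, escapes_at m)
  \/ (0 <= fiter a n x0 <= 1/3 /\ ((1 + 4*a)/3)^n * x0 <= fiter a n x0).
Proof.
  induction n as [| n [Hescape | [Hsmall Hgrowth]]]; [right; simpl; lra | now left |].
  destruct (Rle_dec (fiter a (S n) x0) (1/3)) as [Hstay | Hexit].
  - right; simpl in *.
    pose proof (fa_small_expand a (fiter a n x0) Ha Hsmall).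
    assert (0 <= ((1 + 4*a)/3)^n * x0) by (apply Rmult_le_pos; [apply pow_le |]; lra).
    nra.
  - left; exists n; unfold escapes_at; lra.
Qed.

Lemma fiter_escapes : exists m, escapes_at m.
Proof.
  destruct (pow_mult_unbounded ((1 + 4*a)/3) x0 (1/3) ltac:(lra) ltac:(lra)) as [N HN].
  destruct (fiter_escapes_or_grows N) as [Hescape | Hgrowth]; [exact Hescape | lra].
Qed.

End Expanding.

Theorem theorem2p1 (a : R) (ha : 0 <= a <= 1) (ha2 : a <> 1/2) :
  (forall x : R, 0 <= x <= 1 -> (fa a x = x <-> (x = 0 \/ (1/3 < x <= 1))))
  /\ (0 <= a < 1/2 ->
        forall x0 : R, 0 <= x0 <= 1/3 -> Un_cv (fun n => fiter a n x0) 0)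
  /\ (1/2 < a <= 1 ->
        forall x0 : R, 0 < x0 <= 1/3 ->
          exists (n : nat) (p : R),
            1/3 < p <= (4*a + 1)/9 /\
            fiter a n x0 = p /\ fiter a (S n) x0 = fa a p /\ fa a p = p).
Proof.
  split; [| split].
  - intros x Hx; exact (fa_fixed_iff a x ha2 Hx).
  - intros Ha x0 Hx0; exact (fiter_contract_cv_0 a x0 Ha Hx0).
  - intros Ha x0 Hx0.
    destruct (fiter_escapes a x0 ltac:(lra) Hx0) as [m [Hbefore Hafter]].
    exists (S m), (fiter a (S m) x0).
    assert (Hbound : fiter a (S m) x0 <= (4*a + 1)/9) by exact (fa_small_le a _ ltac:(lra) Hbefore).
    assert (Hfixed : fa a (fiter a (S m) x0) = fiter a (S m) x0) by now apply fa_large.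
    repeat split; easy.
Qed.
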